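(* Let $M$ be a matroid on ground set $E$ and let $B_1<B_2<\dots<B_n$ be an ordering of all its bases such that for every $i=1,\dots,n$ there exists a linear functional $\ell_i\in(\mathbb{R}^E)^*$ with $\ell_i(B_j)<\ell_i(B_i)$ if and only if $j<i$. Then this order is a shelling order of $\mathcal{I}(M)$, and the restriction set of each basis $B_i$ is $\mathcal{R}(B_i)=IP_{\ell_i}(B_i)$.
   Context: A linear functional $\ell\in(\mathbb{R}^E)^*$ is identified with a function $\ell:E\to\mathbb{R}$, and $\ell(B)=\sum_{b\in B}\ell(b)$ (equivalently, $\ell$ evaluated at the characteristic vector $\chi_B$). $\mathcal{I}(M)$ is the independence complex of $M$, whose facets are the bases. A shelling order of a pure simplicial complex is a total order $F_1<\dots<F_k$ of its facets such that for each $j\ge2$, $\langle F_1,\dots,F_{j-1}\rangle\cap\langle F_j\rangle$ is pure of dimension one less than the complex; the restriction set $\mathcal{R}(F_j)$ is the unique subset of $F_j$ such that the faces of $\langle F_1,\dots,F_j\rangle$ not in $\langle F_1,\dots,F_{j-1}\rangle$ are exactly the subsets of $F_j$ containing $\mathcal{R}(F_j)$. For a basis $B$, $IP_\ell(B)$ (the internally passive set with respect to the order on $E$ induced by $\ell$) is the set of $b\in B$ for which there is $b'\in E\setminus B$ with $\ell(b')<\ell(b)$ and $(B\setminus\{b\})\cup\{b'\}$ a basis. *)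

From mathcomp Require Import all_boot all_order all_algebra.
Set Implicit Arguments. Unset Strict Implicit. Unset Printing Implicit Defensive.
Import Order.TTheory GRing.Theory Num.Theory.

Section Defs.
Variable E : finType.

Definition is_matroid_bases (bases : {set {set E}}) : Prop :=
  bases != set0 /\
  forall B1 B2, B1 \in bases -> B2 \in bases ->
    forall x, x \in B1 :\: B2 ->
      exists2 y, y \in B2 :\: B1 & (B1 :\ x) :|: [set y] \in bases.

Definition independent (bases : {set {set E}}) (X : {set E}) : Prop :=
  exists2 B, B \in bases & X \subset B.

Definition lval (R : numDomainType) (l : E -> R) (B : {set E}) : R :=
  (\sum_(b in B) l b)%R.

Definition IP (R : numDomainType) (bases : {set {set E}}) (l : E -> R)
    (B : {set E}) : {set E} :=
  [set b in B | [exists b', [&& b' \notin B, (l b' < l b)%R &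
                                 (B :\ b) :|: [set b'] \in bases]]].

(* Faces of the subcomplex <F_1,...,F_{j-1}> generated by the first j facets
   (0-based) of the sequence s. *)
Definition in_prefix_complex (s : seq {set E}) (j : nat) (X : {set E}) : bool :=
  has (fun F : {set E} => X \subset F) (take j s).

(* A collection of faces K is pure with faces of maximal cardinality k
   (i.e. pure of dimension k-1): every face has size <= k and lies in a face
   of size exactly k. *)
Definition pure_of_card (K : {set E} -> bool) (k : nat) : Prop :=
  (forall X, K X -> #|X| <= k) /\
  (forall X, K X -> exists Y, [/\ K Y, X \subset Y & #|Y| = k]).

Definition complex_card (s : seq {set E}) : nat := \max_(F <- s) #|F|.

(* s is a shelling order of the pure simplicial complex whose facets are
   the elements of `facets`: s lists all the facets exactly once, and for each
   j >= 2 (0-based: 0 < j), <F_1..F_{j-1}> cap <F_j> is pure of dimension one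
   less than the complex. *)
Definition shelling_order (facets : {set {set E}}) (s : seq {set E}) : Prop :=
  [/\ uniq s, (forall F, (F \in s) = (F \in facets)) &
      forall j, 0 < j < size s ->
        pure_of_card
          (fun X => (X \subset nth set0 s j) && in_prefix_complex s j X)
          (complex_card s).-1].

(* R is the restriction set of the j-th facet (0-based) in s: R is a subset of
   F_j and the faces of <F_1..F_j> not in <F_1..F_{j-1}> are exactly the subsets
   of F_j containing R. *)
Definition is_restriction_set (s : seq {set E}) (j : nat) (R : {set E}) : Prop :=
  R \subset nth set0 s j /\
  forall X, (in_prefix_complex s j.+1 X && ~~ in_prefix_complex s j X)
            = (R \subset X) && (X \subset nth set0 s j).

End Defs.

(* For k < j the functional l_j makes B_k cheaper than B_j, and a cheaper basis
   can always be approached by one improving exchange: some b in B_j \ B_k and b'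
   with l_j b' < l_j b make B_j - b + b' a basis (induction on |B_j \ B_k|, using
   the symmetric exchange property).  Such a b is l_j-internally passive and lies
   outside B_k.  Conversely, for b in IP_{l_j}(B_j) the basis B_j - b + b' is
   l_j-cheaper, hence one of the earlier B_m, and it contains B_j - b.  So a face
   of B_j lies in an earlier facet iff it misses an element of IP_{l_j}(B_j): the
   intersection with the earlier facets is generated by the B_j - b for b in
   IP_{l_j}(B_j), and the new faces are those containing IP_{l_j}(B_j). *)

From mathcomp Require Import all_boot all_order all_algebra.
Import Order.TTheory GRing.Theory Num.Theory.
Set Implicit Arguments. Unset Strict Implicit. Unset Printing Implicit Defensive.

Section FinsetExchange.
Variable T : finType.
Implicit Types (A B C : {set T}) (x y : T).

Lemma cards_exchange B x y : x \in B -> y \notin B -> #|B :\ x :|: [set y]| = #|B|.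
Proof.
move=> xB yB; rewrite setUC cardsU1 (cardsD1 x B) xB !inE negb_and yB orbT.
by rewrite addnC.
Qed.

Lemma subsetU1_cards_eq B C y : y \notin B -> y \in C -> C \subset y |: B ->
  #|C| = #|B| -> exists2 x, x \in B :\: C & C = B :\ x :|: [set y].
Proof.
move=> yB yC sCB cardCB.
have sC'B : C :\ y \subset B.
  by apply/subsetP => z; rewrite !inE => /andP[/negPf zy /(subsetP sCB)]; rewrite !inE zy.
have /cards1P[x BC'x] : #|B :\: (C :\ y)| == 1.
  by rewrite cardsD (setIidPr sC'B) -cardCB (cardsD1 y C) yC addnK.
have BCx : B :\: C = [set x].
  rewrite -BC'x; apply/setP => z; rewrite !inE.
  by case: eqP => [->|_]; rewrite ?(negPf yB) ?andbF.
exists x; first by rewrite BCx set11.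
by rewrite -BC'x setDDr setDv set0U (setIidPr sC'B) setUC setD1K.
Qed.

Lemma setD_exchange_subset A B x y : x \notin A -> y \in A ->
  A :\: (B :\ x :|: [set y]) \subset (A :\: B) :\ y.
Proof.
move=> xA yA; apply/subsetP => u; rewrite !inE negb_or negb_and negbK.
case/andP=> /andP[/orP[/eqP-> | uB] uy] uA; first by rewrite uA in xA.
by rewrite uy uB uA.
Qed.

Lemma exchange_setD_subset A B x y : y \in A -> (B :\ x :|: [set y]) :\: A \subset B :\: A.
Proof.
move=> yA; apply/subsetP => u; rewrite !inE => /andP[uA /orP[/andP[_ uB] | /eqP uy]].
  by rewrite uA uB.
by rewrite uy yA in uA.
Qed.

End FinsetExchange.

Lemma exists_min_in (T : finType) (d : Order.disp_t) (R : orderType d) (f : T -> R)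
    (A : {set T}) :
  A != set0 -> exists2 a, a \in A & forall x, x \in A -> (f a <= f x)%O.
Proof. by case/set0Pn => a0 /(arg_minP f) [a aA amin]; exists a. Qed.

Lemma lval_exchange (R : numDomainType) (E : finType) (l : E -> R) (B : {set E}) b b' :
  b \in B -> b' \notin B -> lval l (B :\ b :|: [set b']) = (lval l B - l b + l b')%R.
Proof.
move=> bB b'B; rewrite /lval setUC big_setU1 ?(big_setD1 b bB) //=; last first.
  by rewrite !inE negb_and b'B orbT.
by rewrite [(l b + _)%R]addrC addrK addrC.
Qed.

Section BasisExchange.
Variables (E : finType) (bases : {set {set E}}).
Hypothesis basis_exchange : forall B1 B2, B1 \in bases -> B2 \in bases ->
  forall x, x \in B1 :\: B2 -> exists2 y, y \in B2 :\: B1 & B1 :\ x :|: [set y] \in bases.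

Lemma bases_subset_eq B1 B2 : B1 \in bases -> B2 \in bases -> B1 \subset B2 -> B1 = B2.
Proof.
move=> B1b B2b sB12; apply/eqP; rewrite eqEsubset sB12 -setD_eq0.
apply/set0Pn => -[x xB21].
have [y] := basis_exchange B2b B1b xB21.
by rewrite inE => /andP[/negP yB2 /(subsetP sB12)].
Qed.

Lemma card_bases B1 B2 : B1 \in bases -> B2 \in bases -> #|B1| = #|B2|.
Proof.
move=> B1b B2b; move: {2}#|B1 :\: B2| (leqnn #|B1 :\: B2|) => n.
elim: n B1 B1b => [|n IHn] B1 B1b.
  by rewrite leqn0 cards_eq0 setD_eq0 => /(bases_subset_eq B1b B2b)->.
have [/eqP|[x xB12]] := set_0Vmem (B1 :\: B2).
  by rewrite setD_eq0 => /(bases_subset_eq B1b B2b)->.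
have [y yB21 B1'b] := basis_exchange B1b B2b xB12.
move: (xB12) (yB21); rewrite !inE => /andP[xB2 xB1] /andP[yB1 yB2].
rewrite (cardsD1 x) xB12 ltnS -(cards_exchange xB1 yB1) => le_n.
apply: IHn B1'b _; apply: leq_trans le_n; apply: subset_leq_card.
apply/subsetP => z; rewrite !inE => /andP[zB2 /orP[/andP[zx zB1]|/eqP zy]].
  by rewrite zx zB2 zB1.
by rewrite zy yB2 in zB2.
Qed.

Lemma basis_extension_within B1 B2 (A : {set E}) :
  B1 \in bases -> B2 \in bases -> A \subset B2 ->
  exists B3, [/\ B3 \in bases, A \subset B3 & B3 \subset A :|: B1].
Proof.
move=> B1b B2b sAB2.
pose P C := (C \in bases) && (A \subset C).
have PB2 : P B2 by rewrite /P B2b sAB2.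
have [B3 /andP[B3b sAB3] maxB3] := arg_maxnP (fun C => #|C :&: B1|) PB2.
exists B3; split => //; apply/subsetP => z zB3; rewrite inE.
apply/negPn/negP; rewrite negb_or => /andP[zA zB1].
have zB31 : z \in B3 :\: B1 by rewrite inE zB1.
have [w] := basis_exchange B3b B1b zB31.
rewrite inE => /andP[wB3 wB1] B3'b.
have /maxB3 : P (B3 :\ z :|: [set w]).
  rewrite /P B3'b; apply/subsetP => u uA; rewrite !inE (subsetP sAB3) //.
  by case: eqP uA => [->|]; rewrite ?(negPf zA) ?orbT.
apply/negP; rewrite -ltnNge; apply: proper_card; apply/properP; split.
  apply/subsetP => u; rewrite !inE => /andP[uB3 uB1].
  have uz : u != z by apply: contraNneq zB1 => <-.
  by rewrite uz uB3 uB1.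
by exists w; rewrite !inE ?eqxx ?orbT ?wB1 // (negPf wB3).
Qed.

Lemma basis_exchange_sym B1 B2 y : B1 \in bases -> B2 \in bases -> y \in B2 :\: B1 ->
  exists2 x, x \in B1 :\: B2 & B1 :\ x :|: [set y] \in bases.
Proof.
move=> B1b B2b; rewrite inE => /andP[yB1 yB2].
have sAB2 : y |: (B1 :&: B2) \subset B2 by rewrite subUset sub1set yB2 subsetIr.
have [B3 [B3b sAB3 sB3]] := basis_extension_within B1b B2b sAB2.
have yB3 : y \in B3 by apply: (subsetP sAB3); rewrite !inE eqxx.
have sB3B1 : B3 \subset y |: B1.
  by rewrite (subset_trans sB3) // -setUA setUS // subUset subsetIl subxx.
have [x xB13 B3E] := subsetU1_cards_eq yB1 yB3 sB3B1 (card_bases B3b B1b).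
exists x; last by rewrite -B3E.
move: xB13; rewrite !inE => /andP[xB3 xB1]; rewrite xB1 andbT.
by apply: contra xB3 => xB2; apply: (subsetP sAB3); rewrite !inE xB1 xB2 orbT.
Qed.

Lemma bases_setD_neq0 B1 B2 : B1 \in bases -> B2 \in bases -> B1 != B2 ->
  B1 :\: B2 != set0.
Proof.
by move=> B1b B2b; apply: contra; rewrite setD_eq0 => /(bases_subset_eq B1b B2b)->.
Qed.

Lemma lval_lt_exchange (R : realDomainType) (l : E -> R) B B' :
  B \in bases -> B' \in bases -> (lval l B' < lval l B)%R ->
  exists b b', [/\ b \in B :\: B', b' \in B' :\: B, (l b' < l b)%R
                 & B :\ b :|: [set b'] \in bases].
Proof.
move=> Bb; move: {2}#|B :\: B'| (leqnn #|B :\: B'|) => n.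
elim: n B' => [|n IHn] B' le_n B'b lt_l.
  move: le_n; rewrite leqn0 cards_eq0 setD_eq0 => /(bases_subset_eq Bb B'b) eqBB'.
  by rewrite eqBB' ltxx in lt_l.
have neqBB' : B != B' by apply: contraTneq lt_l => ->; rewrite ltxx.
have neqB'B : B' != B by rewrite eq_sym.
have [e eB emin] := exists_min_in l (bases_setD_neq0 Bb B'b neqBB').
have [e' eB' emin'] := exists_min_in l (bases_setD_neq0 B'b Bb neqB'B).
(* Either e can be exchanged into B' without raising [l B'], which shrinks
   [B :\: B'], or e' undercuts every element of [B :\: B']. *)
have [le_ee' | lt_e'e] := leP (l e) (l e').
- have [z zB'B B''b] := basis_exchange_sym B'b Bb eB.
  move: (eB) (zB'B); rewrite !inE => /andP[eNB' eB0] /andP[zB zB'].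
  have lt_l'' : (lval l (B' :\ z :|: [set e]) < lval l B)%R.
    rewrite lval_exchange //; apply: le_lt_trans lt_l.
    have le_ez : (l e <= l z)%R by apply: le_trans le_ee' (emin' _ zB'B).
    by rewrite -addrA gerDl addrC subr_le0.
  have sBB'' := setD_exchange_subset B' zB eB0.
  have le_n'' : #|B :\: (B' :\ z :|: [set e])| <= n.
    by apply: leq_trans (subset_leq_card sBB'') _; move: le_n; rewrite (cardsD1 e) eB.
  have [b [b' [bB b'B lt_b Bb'b]]] := IHn _ le_n'' B''b lt_l''.
  exists b, b'; split => //.
    exact: (subsetP (subset_trans sBB'' (subD1set _ _))).
  exact: (subsetP (exchange_setD_subset B' z eB0)).
- have [x xB Bx'b] := basis_exchange_sym Bb B'b eB'.
  by exists x, e'; split => //; apply: lt_le_trans lt_e'e (emin _ xB).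
Qed.

End BasisExchange.

Lemma IP_subset (R : numDomainType) (E : finType) (bases : {set {set E}}) (l : E -> R)
    (B : {set E}) :
  IP bases l B \subset B.
Proof. by apply/subsetP => b; rewrite /IP inE => /andP[]. Qed.

Section PrefixComplex.
Variables (E : finType) (s : seq {set E}).
Implicit Types (X : {set E}) (j : nat).

Lemma in_prefix_complexP j X : j <= size s ->
  reflect (exists2 k, k < j & X \subset nth set0 s k) (in_prefix_complex s j X).
Proof.
move=> js; apply: (iffP (has_nthP set0)); rewrite size_takel //.
  by move=> [k kj]; rewrite nth_take //; exists k.
by move=> [k kj XSk]; exists k; rewrite ?nth_take.
Qed.

Lemma in_prefix_complexS j X : j < size s ->
  in_prefix_complex s j.+1 X = in_prefix_complex s j X || (X \subset nth set0 s j).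
Proof. by move=> js; rewrite /in_prefix_complex (take_nth set0 js) has_rcons orbC. Qed.

Lemma complex_card_nth j :
  (forall F G, F \in s -> G \in s -> #|F| = #|G|) -> j < size s ->
  complex_card s = #|nth set0 s j|.
Proof.
move=> card_s js; have Sj := mem_nth set0 js.
apply/eqP; rewrite eqn_leq (leq_bigmax_seq _ Sj) // andbT.
by apply/bigmax_leqP_seq => F Fs _; rewrite (card_s F _ Fs Sj).
Qed.

End PrefixComplex.

Section LinearShelling.
Variables (R : realDomainType) (E : finType) (bases : {set {set E}}).
Variables (s : seq {set E}) (l : nat -> E -> R).
Hypothesis basis_exchange : forall B1 B2, B1 \in bases -> B2 \in bases ->
  forall x, x \in B1 :\: B2 -> exists2 y, y \in B2 :\: B1 & B1 :\ x :|: [set y] \in bases.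
Hypothesis mem_s : forall B, (B \in s) = (B \in bases).
Hypothesis lval_order : forall i j, i < size s -> j < size s ->
  (lval (l i) (nth set0 s j) < lval (l i) (nth set0 s i))%R = (j < i).

Local Notation S := (nth set0 s).
Implicit Types (B X : {set E}) (i j k : nat).

Lemma nth_bases j : j < size s -> S j \in bases.
Proof. by move=> js; rewrite -mem_s mem_nth. Qed.

Lemma index_bases B : B \in bases -> exists2 k, k < size s & S k = B.
Proof. by move=> Bb; exists (index B s); rewrite ?index_mem ?nth_index ?mem_s. Qed.

Lemma passive_drop_earlier j b : j < size s -> b \in IP bases (l j) (S j) ->
  exists2 m, m < j & S j :\ b \subset S m.
Proof.
move=> js; rewrite inE => /andP[bSj /existsP[b' /and3P[b'Sj lt_b'b Sjb'b]]].
have [m ms Sm] := index_bases Sjb'b.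
exists m; last by rewrite Sm subsetUl.
by rewrite -(lval_order js ms) Sm lval_exchange // -addrA gtrDl addrC subr_lt0.
Qed.

Lemma passive_notin_earlier j k : j < size s -> k < j ->
  exists2 b, b \in IP bases (l j) (S j) & b \notin S k.
Proof.
move=> js kj; have ks := ltn_trans kj js.
have lt_jk : (lval (l j) (S k) < lval (l j) (S j))%R by rewrite lval_order.
have [b [b' [bSjk b'Skj lt_b'b Sjb'b]]] :=
  lval_lt_exchange basis_exchange (nth_bases js) (nth_bases ks) lt_jk.
move: bSjk b'Skj; rewrite !inE => /andP[bSk bSj] /andP[b'Sj _].
by exists b => //; rewrite inE bSj; apply/existsP; exists b'; rewrite b'Sj lt_b'b.
Qed.

Lemma face_in_prefix j X : j < size s -> X \subset S j ->
  in_prefix_complex s j X = ~~ (IP bases (l j) (S j) \subset X).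
Proof.
move=> js XSj; apply/(in_prefix_complexP _ (ltnW js))/subsetPn.
- move=> [k kj XSk]; have [b bIP bSk] := passive_notin_earlier js kj.
  by exists b => //; apply: contra bSk; apply: (subsetP XSk).
- move=> [b bIP bX]; have [m mj Sjb_Sm] := passive_drop_earlier js bIP.
  by exists m => //; apply: subset_trans Sjb_Sm; rewrite subsetD1 XSj bX.
Qed.

Lemma prefix_faces_pure j : j < size s ->
  pure_of_card (fun X => (X \subset S j) && in_prefix_complex s j X) #|S j|.-1.
Proof.
move=> js.
have cardSjD1 b : b \in IP bases (l j) (S j) -> #|S j :\ b| = #|S j|.-1.
  by move=> /(subsetP (IP_subset _ _ _)) bSj; rewrite (cardsD1 b (S j)) bSj.
have facet_of X : (X \subset S j) && in_prefix_complex s j X ->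
    exists2 b, b \in IP bases (l j) (S j) & X \subset S j :\ b.
  case/andP=> XSj; rewrite face_in_prefix // => /subsetPn[b bIP bX].
  by exists b; rewrite // subsetD1 XSj bX.
split=> X /facet_of[b bIP XSjb].
  by rewrite -(cardSjD1 b bIP) subset_leq_card.
exists (S j :\ b); split=> //; last exact: cardSjD1.
rewrite subD1set face_in_prefix ?subD1set //.
by apply/subsetPn; exists b; rewrite // !inE eqxx.
Qed.

Lemma restriction_set_IP i : i < size s -> is_restriction_set s i (IP bases (l i) (S i)).
Proof.
move=> i_s; split=> [|X]; first exact: IP_subset.
rewrite in_prefix_complexS //; case XSi: (X \subset S i); last by rewrite orbF andbN andbF.
by rewrite orbT face_in_prefix // negbK andbT.
Qed.

End LinearShelling.

Theorem lemma6p1 (R : realFieldType) (E : finType) (bases : {set {set E}})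
    (s : seq {set E}) (l : nat -> E -> R) :
  is_matroid_bases bases ->
  uniq s -> (forall B, (B \in s) = (B \in bases)) ->
  (forall i j, i < size s -> j < size s ->
     (lval (l i) (nth set0 s j) < lval (l i) (nth set0 s i))%R = (j < i)) ->
  shelling_order bases s /\
  (forall i, i < size s -> is_restriction_set s i (IP bases (l i) (nth set0 s i))).
Proof.
move=> [_ exch] us mem_s lval_order.
have card_s : forall F G : {set E}, F \in s -> G \in s -> #|F| = #|G|.
  by move=> F G; rewrite !mem_s => Fb Gb; exact (card_bases exch Fb Gb).
split; last exact: restriction_set_IP exch mem_s lval_order.
split=> // j /andP[_ js]; rewrite (complex_card_nth card_s js).
exact (prefix_faces_pure exch mem_s lval_order js).
Qed.
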